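(* Let $\eta_1,\dots,\eta_r\in\mathbb{R}$ be pairwise distinct, let $q_1,\dots,q_r$ be real nonzero polynomials with $\deg q_j=\sigma_j-1$, and let $\gamma=\sigma_1+\dots+\sigma_r$. Let $h:\mathbb{R}\to\mathbb{R}$ be a function with $h\in C^{\gamma-2}(\mathbb{R})$, $h^{(\gamma-2)}$ absolutely continuous, $h(x+1)=-h(x)$ for all $x\in\mathbb{R}$, and $$h(x)=\sum_{j=1}^r q_j(x)e^{\eta_j x},\qquad x\in[0,1).$$ Then there exists $x_0\in\mathbb{R}$ such that $h$ is monotone on each interval $[x_0+k,x_0+k+1)$, $k\in\mathbb{Z}$. *)

From Stdlib Require Import Reals.
From Coquelicot Require Import Coquelicot.
From mathcomp Require Import all_boot all_algebra.
From mathcomp Require Import Rstruct.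

Open Scope R_scope.

Definition C_n (n : nat) (f : R -> R) : Prop :=
  forall k : nat, (k <= n)%N -> forall x : R,
    ex_derive_n f k x /\ continuous (Derive_n f k) x.

(* Disjointness is encoded by listing the
   intervals in increasing order: a <= u_0 <= v_0 <= u_1 <= ... <= v_{m-1} <= b. *)
Definition abs_cont_on (a b : R) (f : R -> R) : Prop :=
  forall eps : R, 0 < eps -> exists delta : R, 0 < delta /\
    forall (m : nat) (u v : nat -> R),
      (forall i : nat, (i < m)%N -> u i <= v i) ->
      (forall i : nat, (i.+1 < m)%N -> v i <= u i.+1) ->
      (0 < m)%N -> a <= u 0%N -> v m.-1 <= b ->
      sum_f_R0 (fun i => v i - u i) m.-1 < delta ->
      sum_f_R0 (fun i => Rabs (f (v i) - f (u i))) m.-1 < eps.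

Definition abs_cont (f : R -> R) : Prop :=
  forall a b : R, a <= b -> abs_cont_on a b f.

Definition monotone_on_Ico (a b : R) (f : R -> R) : Prop :=
  (forall x y, a <= x -> x <= y -> y < b -> f x <= f y) \/
  (forall x y, a <= x -> x <= y -> y < b -> f y <= f x).

(* On [0, 1), h is an exponential polynomial F = sum_j q_j(x) e^(eta_j x) and h is its
   antiperiodic extension.  The C^(gamma-2) hypothesis forces F^(m)(1) = -F^(m)(0) for
   m <= gamma - 2, so these derivatives extend continuously.  If h' changed sign as
   (+, -, +) within less than a period, Rolle's theorem applied to exp(-eta_j t) G(t) on the
   three arcs (closing up by antiperiodicity) would give the same pattern for (d/dx - eta_j) G;
   each such step lowers the total size sum_j sigma_j, ending at an exponential polynomial
   of total size at most 2, which has no such pattern.  Hence h' <= 0 on some window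
   (x0, x0 + 1), and h' has a constant sign on each translate (x0 + k, x0 + k + 1).  If
   gamma <= 1, h' has a constant sign on each (k, k + 1) directly. *)

From Stdlib Require Import Reals Lra Classical FunctionalExtensionality.
From Coquelicot Require Import Coquelicot.
From mathcomp Require Import all_boot all_algebra.
From mathcomp Require Import Rstruct zify.
Import GRing.Theory.

Set Implicit Arguments.
Unset Strict Implicit.
Open Scope R_scope.

Lemma derivable_pt_lim_horner (p : {poly R}) x :
  derivable_pt_lim (fun t => p.[t]%R) x (p^`()).[x]%R.
Proof.
elim/poly_ind: p => [|p c IH].
  rewrite deriv0 horner0.
  apply: (derivable_pt_lim_ext (fun _ => 0)); first by move=> t; rewrite horner0.
  exact: derivable_pt_lim_const.
apply: (derivable_pt_lim_ext (fun t => p.[t]%R * t + c)); first by move=> t; rewrite hornerMXaddC.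
rewrite derivMXaddC hornerD hornerM hornerX.
rewrite -RplusE -RmultE.
have -> : p.[x]%R + (p^`()).[x]%R * x = (p^`()).[x]%R * Ranalysis1.id x + p.[x]%R * 1 + 0.
  by rewrite /Ranalysis1.id; ring.
exact: derivable_pt_lim_plus (derivable_pt_lim_mult _ _ x _ _ IH (derivable_pt_lim_id x))
  (derivable_pt_lim_const c x).
Qed.

Lemma derivable_pt_lim_bigsum (I : Type) (s : seq I) (F dF : I -> R -> R) x :
  (forall i, derivable_pt_lim (F i) x (dF i x)) ->
  derivable_pt_lim (fun t => \sum_(i <- s) F i t)%R x (\sum_(i <- s) dF i x)%R.
Proof.
move=> dFi; elim: s => [|i s IH].
  rewrite big_nil; apply: (derivable_pt_lim_ext (fun _ => 0)); first by move=> t; rewrite big_nil.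
  exact: derivable_pt_lim_const.
rewrite big_cons; apply: (derivable_pt_lim_ext (fun t => F i t + \sum_(j <- s) F j t)%R).
  by move=> t; rewrite big_cons.
exact: derivable_pt_lim_plus (dFi i) IH.
Qed.

Lemma weighted_mvt (f g : R -> R) (l sg a b : R) :
  (forall x, derivable_pt_lim f x (g x + l * f x)) -> a < b ->
  sg * (exp (- l * b) * f b) < sg * (exp (- l * a) * f a) ->
  exists c, a < c < b /\ sg * g c < 0.
Proof.
move=> df ab decr.
have dpsi c : derivable_pt_lim (fun t => exp (- l * t) * f t) c (exp (- l * c) * g c).
  have de : derivable_pt_lim (fun t => exp (- l * t)) c (- l * exp (- l * c)).
    by apply/is_derive_Reals; auto_derive; [|ring].
  rewrite (_ : exp _ * g c = - l * exp (- l * c) * f c + exp (- l * c) * (g c + l * f c));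
    last by ring.
  exact: derivable_pt_lim_mult de (df c).
have [c [mvt cab]] := MVT_cor2 _ _ a b ab (fun c _ => dpsi c).
exists c; split => //.
have ec := exp_pos (- l * c).
have pos : 0 < exp (- l * c) * (b - a) by apply: Rmult_lt_0_compat; lra.
have : sg * g c * (exp (- l * c) * (b - a)) < 0.
  have -> : sg * g c * (exp (- l * c) * (b - a)) = sg * (exp (- l * c) * g c * (b - a)).
    by ring.
  by rewrite -mvt; nra.
nra.
Qed.

Lemma weighted_sign_change (f g : R -> R) (l sg a b : R) :
  (forall x, derivable_pt_lim f x (g x + l * f x)) -> a < b ->
  0 < sg * f a -> sg * f b < 0 -> exists c, a < c < b /\ sg * g c < 0.
Proof.
move=> df ab pa nb; apply: weighted_mvt df ab _.
have := exp_pos (- l * a); have := exp_pos (- l * b); nra.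
Qed.

Lemma derivable_pt_lim_scal_shift (f : R -> R) (s k x d : R) :
  derivable_pt_lim f (x - k) d -> derivable_pt_lim (fun t => s * f (t - k)) x (s * d).
Proof.
move=> df; have dt : derivable_pt_lim (fun t => t - k) x 1.
  by apply/is_derive_Reals; auto_derive; [|ring].
rewrite -(Rmult_1_r d); exact: derivable_pt_lim_scal (derivable_pt_lim_comp _ _ _ _ _ dt df).
Qed.

Lemma continuous_eq_near (f g : R -> R) (a : R) : continuous f a -> continuous g a ->
  (forall d, 0 < d -> exists x, Rabs (x - a) < d /\ f x = g x) -> f a = g a.
Proof.
move=> /continuity_pt_filterlim cf /continuity_pt_filterlim cg near_eq.
apply: NNPP => ne; set eps := Rabs (f a - g a) / 2.
have he : 0 < eps by have := Rabs_pos_lt (f a - g a) ltac:(lra); rewrite /eps; lra.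
have close (k : R -> R) : continuity_pt k a ->
    exists d, 0 < d /\ forall y, Rabs (y - a) < d -> Rabs (k y - k a) < eps.
  move=> ck; have [d [hd close]] := ck _ he; exists d; split => // y hy.
  have [->|ya] := Req_dec y a; first by rewrite Rminus_diag Rabs_R0.
  exact: close (conj (conj I (not_eq_sym ya)) hy).
have [d1 [hd1 close_f]] := close f cf.
have [d2 [hd2 close_g]] := close g cg.
have [x [hx ex]] := near_eq (Rmin d1 d2) (Rmin_glb_lt _ _ _ hd1 hd2).
have := close_f x (Rlt_le_trans _ _ _ hx (Rmin_l _ _)).
have := close_g x (Rlt_le_trans _ _ _ hx (Rmin_r _ _)).
rewrite /eps ex; split_Rabs; lra.
Qed.

Lemma monotone_of_mvt (F dF : R -> R) (sg w : R) : sg = 1 \/ sg = -1 ->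
  (forall x y, w <= x -> x < y -> y < w + 1 -> sg * F y < sg * F x ->
     exists c, x < c < y /\ sg * dF c < 0) ->
  (forall c, w < c < w + 1 -> 0 <= sg * dF c) -> monotone_on_Ico w (w + 1) F.
Proof.
move=> sg1 mvt nonneg.
have incr x y : w <= x -> x <= y -> y < w + 1 -> sg * F x <= sg * F y.
  move=> wx xy yw; have [lt|->] := Rle_lt_or_eq_dec _ _ xy; last lra.
  apply: Rnot_lt_le => decr; have [c [cxy neg]] := mvt x y wx lt yw decr.
  by have := nonneg c ltac:(lra); lra.
by case: sg1 => sgE; [left|right] => x y wx xy yw; have := incr x y wx xy yw;
  rewrite sgE; lra.
Qed.

Definition alt_sign (k : Z) : R := if Z.even k then 1 else -1.

Lemma alt_sign_succ (k : Z) : alt_sign (Z.succ k) = - alt_sign k.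
Proof. by rewrite /alt_sign Z.even_succ -Z.negb_even; case: Z.even => /=; lra. Qed.

Lemma alt_sign_pred k : alt_sign (Z.pred k) = - alt_sign k.
Proof. by rewrite /alt_sign Z.even_pred -Z.negb_even; case: Z.even => /=; lra. Qed.

Lemma alt_sign_sqr k : alt_sign k * alt_sign k = 1.
Proof. by rewrite /alt_sign; case: Z.even; lra. Qed.

Lemma alt_sign_pm1 k : alt_sign k = 1 \/ alt_sign k = -1.
Proof. by rewrite /alt_sign; case: Z.even; [left|right]. Qed.

Lemma antiperiodic_shift (f : R -> R) : (forall x, f (x + 1) = - f x) ->
  forall k x, f (x + IZR k) = alt_sign k * f x.
Proof.
move=> anti k; elim/Z.peano_ind: k => [|k IH|k IH] x.
- by rewrite Rplus_0_r /alt_sign /=; ring.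
- by rewrite succ_IZR alt_sign_succ -Rplus_assoc anti IH; ring.
- have := anti (x + IZR (Z.pred k)).
  rewrite Rplus_assoc -succ_IZR Z.succ_pred IH alt_sign_pred -Ropp_mult_distr_l => ->.
  ring.
Qed.

Definition antiperiodic_ext (F : R -> R) (x : R) : R :=
  alt_sign (Int_part x) * F (frac_part x).

Lemma antiperiodic_ext_on F k x : IZR k <= x < IZR k + 1 ->
  antiperiodic_ext F x = alt_sign k * F (x - IZR k).
Proof. by move=> hx; rewrite /antiperiodic_ext /frac_part -(Int_part_spec x k) //; lra. Qed.

Lemma antiperiodic_ext_succ F x : antiperiodic_ext F (x + 1) = - antiperiodic_ext F x.
Proof.
have [lo hi] := base_Int_part x.
rewrite (@antiperiodic_ext_on F (Z.succ (Int_part x))); last by rewrite succ_IZR; lra.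
rewrite alt_sign_succ succ_IZR /antiperiodic_ext /frac_part.
have -> : x + 1 - (IZR (Int_part x) + 1) = x - IZR (Int_part x) by ring.
ring.
Qed.

Lemma antiperiodic_ext_on_closed F k x : F 1 = - F 0 -> IZR k <= x <= IZR k + 1 ->
  antiperiodic_ext F x = alt_sign k * F (x - IZR k).
Proof.
move=> ends [lo hi]; have [lt|eq] := Rle_lt_or_eq_dec _ _ hi.
  by apply: antiperiodic_ext_on; lra.
rewrite (@antiperiodic_ext_on F (Z.succ k)); last by rewrite succ_IZR; lra.
rewrite alt_sign_succ succ_IZR eq.
have -> : IZR k + 1 - (IZR k + 1) = 0 by ring.
have -> : IZR k + 1 - IZR k = 1 by ring.
by rewrite ends; ring.
Qed.

Lemma antiperiodic_eq_ext (h F : R -> R) : (forall x, h (x + 1) = - h x) ->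
  (forall x, 0 <= x < 1 -> h x = F x) -> forall x, h x = antiperiodic_ext F x.
Proof.
move=> anti onF x; rewrite /antiperiodic_ext {1}(Rplus_Int_part_frac_part x) Rplus_comm.
by rewrite (antiperiodic_shift anti) onF //; have := base_fp x; lra.
Qed.

Definition sign_alternation (g : R -> R) (sg : R) : Prop :=
  exists t0 t1 t2, t0 < t1 < t2 /\ t2 < t0 + 1 /\
    0 < sg * g t0 /\ sg * g t1 < 0 /\ 0 < sg * g t2.

Lemma antiperiodic_ext_alternation F sg : sign_alternation (antiperiodic_ext F) sg ->
  exists sg', sign_alternation F sg'.
Proof.
move=> [t0 [t1 [t2 [[h01 h12] [h20 [g0 [g1 g2]]]]]]].
set k := Int_part t0; have [lo hi] := base_Int_part t0; rewrite -/k in lo hi.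
have on0 x : IZR k <= x < IZR k + 1 ->
    antiperiodic_ext F x = alt_sign k * F (x - IZR k).
  exact: antiperiodic_ext_on.
have on1 x : IZR k + 1 <= x < IZR k + 2 ->
    antiperiodic_ext F x = - alt_sign k * F (x - IZR k - 1).
  move=> hx; rewrite (@antiperiodic_ext_on F (Z.succ k)); last by rewrite succ_IZR; lra.
  by rewrite alt_sign_succ succ_IZR; congr (_ * F _); ring.
have sq := alt_sign_sqr k.
have [c2|c2] := Rlt_le_dec t2 (IZR k + 1).
  rewrite !on0 in g0 g1 g2; try lra.
  exists (sg * alt_sign k), (t0 - IZR k), (t1 - IZR k), (t2 - IZR k).
  by repeat split; try lra; nra.
have [c1|c1] := Rlt_le_dec t1 (IZR k + 1).
  rewrite on0 in g0; try lra. rewrite on0 in g1; try lra. rewrite on1 in g2; try lra.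
  exists (- sg * alt_sign k), (t2 - IZR k - 1), (t0 - IZR k), (t1 - IZR k).
  by repeat split; try lra; nra.
rewrite on0 in g0; try lra. rewrite on1 in g1; try lra. rewrite on1 in g2; try lra.
exists (sg * alt_sign k), (t1 - IZR k - 1), (t2 - IZR k - 1), (t0 - IZR k).
by repeat split; try lra; nra.
Qed.

Section AntiperiodicExtMVT.
Variables (f g : R -> R) (l : R).
Hypothesis df : forall x, derivable_pt_lim f x (g x + l * f x).

Lemma antiperiodic_ext_mvt_piece k sg a b : IZR k <= a -> a < b -> b <= IZR k + 1 ->
  sg * (exp (- l * b) * (alt_sign k * f (b - IZR k))) <
  sg * (exp (- l * a) * (alt_sign k * f (a - IZR k))) ->
  exists c, a < c < b /\ sg * antiperiodic_ext g c < 0.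
Proof.
move=> ka ab bk decr.
have dpiece x : derivable_pt_lim (fun t => alt_sign k * f (t - IZR k)) x
    (alt_sign k * g (x - IZR k) + l * (alt_sign k * f (x - IZR k))).
  rewrite (_ : _ + _ = alt_sign k * (g (x - IZR k) + l * f (x - IZR k))); last by ring.
  exact: derivable_pt_lim_scal_shift.
have [c [cab neg]] := weighted_mvt dpiece ab decr.
by exists c; split => //; rewrite (@antiperiodic_ext_on g k) //; lra.
Qed.

Hypothesis ends : f 1 = - f 0.

Lemma antiperiodic_ext_mvt sg a b : a < b -> b < a + 1 ->
  sg * (exp (- l * b) * antiperiodic_ext f b) < sg * (exp (- l * a) * antiperiodic_ext f a) ->
  exists c, a < c < b /\ sg * antiperiodic_ext g c < 0.
Proof.
move=> ab ba decr.
set k := Int_part a; have [lo hi] := base_Int_part a; rewrite -/k in lo hi.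
have on0 x : IZR k <= x <= IZR k + 1 ->
    antiperiodic_ext f x = alt_sign k * f (x - IZR k).
  exact: antiperiodic_ext_on_closed.
have on1 x : IZR k + 1 <= x <= IZR k + 2 ->
    antiperiodic_ext f x = alt_sign (Z.succ k) * f (x - IZR (Z.succ k)).
  by move=> hx; apply: antiperiodic_ext_on_closed => //; rewrite succ_IZR; lra.
have [bk|kb] := Rle_lt_dec b (IZR k + 1).
  by apply: (@antiperiodic_ext_mvt_piece k) => //; rewrite -!on0 //; lra.
have [ma|am] := Rlt_le_dec (sg * (exp (- l * (IZR k + 1)) * antiperiodic_ext f (IZR k + 1)))
                           (sg * (exp (- l * a) * antiperiodic_ext f a)).
  have [c [cam neg]] : exists c, a < c < IZR k + 1 /\ sg * antiperiodic_ext g c < 0.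
    apply: (@antiperiodic_ext_mvt_piece k); try lra.
    by rewrite -!on0 //; lra.
  by exists c; split => //; lra.
have [c [cmb neg]] : exists c, IZR k + 1 < c < b /\ sg * antiperiodic_ext g c < 0.
  apply: (@antiperiodic_ext_mvt_piece (Z.succ k)); try by rewrite ?succ_IZR; lra.
  by rewrite -!on1; lra.
by exists c; split => //; lra.
Qed.

Lemma antiperiodic_ext_sign_change sg a b : a < b -> b < a + 1 ->
  0 < sg * antiperiodic_ext f a -> sg * antiperiodic_ext f b < 0 ->
  exists c, a < c < b /\ sg * antiperiodic_ext g c < 0.
Proof.
move=> ab ba pa nb; apply: antiperiodic_ext_mvt ab ba _.
have := exp_pos (- l * a); have := exp_pos (- l * b); nra.
Qed.

Lemma sign_alternation_step sg : sign_alternation (antiperiodic_ext f) sg ->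
  sign_alternation (antiperiodic_ext g) (- sg).
Proof.
move=> [t0 [t1 [t2 [[h01 h12] [h20 [g0 [g1 g2]]]]]]].
have [c0 [c0r n0]] := antiperiodic_ext_sign_change h01 ltac:(lra) g0 g1.
have [c1 [c1r n1]] : exists c, t1 < c < t2 /\ - sg * antiperiodic_ext g c < 0.
  by apply: antiperiodic_ext_sign_change; lra.
have [c2 [c2r n2]] : exists c, t2 < c < t0 + 1 /\ sg * antiperiodic_ext g c < 0.
  by apply: antiperiodic_ext_sign_change; rewrite ?antiperiodic_ext_succ; lra.
exists c0, c1, c2; repeat split; lra.
Qed.

End AntiperiodicExtMVT.

(* With 0 < g a, the window starts at the infimum of the points of [a, a + 1] where g < 0. *)
Lemma antiperiodic_nonpos_window (g : R -> R) : (forall x, g (x + 1) = - g x) ->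
  ~ sign_alternation g 1 -> exists x0, forall c, x0 < c < x0 + 1 -> g c <= 0.
Proof.
move=> anti noalt.
have [[a pa]|nopos] := classic (exists a, 0 < g a); last first.
  by exists 0 => c _; apply: Rnot_lt_le => gc; apply: nopos; exists c.
pose E y := forall n, a <= n <= a + 1 -> g n < 0 -> y <= n.
have Eb : bound E by exists (a + 1) => y Ey; apply: Ey; [lra | rewrite anti; lra].
have Ea : E a by move=> n [].
have [m [mub mlub]] := completeness E Eb (ex_intro _ a Ea).
have am : a <= m by apply: mub.
have ma : m <= a + 1 by apply: mlub => y Ey; apply: Ey; [lra | rewrite anti; lra].
have left_nonneg x : a <= x < m -> 0 <= g x.
  move=> hx; apply: Rnot_lt_le => gx.
  have : m <= x by apply: mlub => y Ey; apply: Ey => //; lra.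
  lra.
have right_nonpos x : m < x < a + 1 -> g x <= 0.
  move=> hx; apply: Rnot_lt_le => gx.
  have : ~ E x by move=> Ex; have := mub x Ex; lra.
  apply => n hn gn; apply: Rnot_lt_le => nx.
  have an : a < n by case: (Rle_lt_or_eq_dec _ _ (proj1 hn)) => // an; rewrite -an in gn; lra.
  by apply: noalt; exists a, n, x; rewrite !Rmult_1_l; repeat split; lra.
exists m => c hc; have [ca|ac] := Rlt_le_dec c (a + 1); first by apply: right_nonpos; lra.
have -> : c = (c - 1) + 1 by ring.
by rewrite anti; have := left_nonneg (c - 1) ltac:(lra); lra.
Qed.

Lemma antiperiodic_window_sign (g : R -> R) x0 k : (forall x, g (x + 1) = - g x) ->
  (forall c, x0 < c < x0 + 1 -> g c <= 0) ->
  forall c, x0 + IZR k < c < x0 + IZR k + 1 -> 0 <= - alt_sign k * g c.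
Proof.
move=> anti nonpos c hc; have -> : c = (c - IZR k) + IZR k by ring.
rewrite (antiperiodic_shift anti) -Rmult_assoc -Ropp_mult_distr_l alt_sign_sqr.
by have := nonpos (c - IZR k) ltac:(lra); lra.
Qed.

Lemma antiperiodic_ext_Derive_n_ends (h F : R -> R) m :
  (forall x, h x = antiperiodic_ext F x) -> continuous (Derive_n h m) 1 ->
  continuous (Derive_n F m) 0 -> continuous (Derive_n F m) 1 ->
  Derive_n F m 1 = - Derive_n F m 0.
Proof.
move=> hext ch cF0 cF1.
have near1 d : 0 < d -> exists e, 0 < e < 1 /\ e < d by move=> hd; exists (Rmin d 1 / 2);
  have := Rmin_l d 1; have := Rmin_r d 1; have := Rmin_glb_lt _ _ _ hd Rlt_0_1; lra.
have on0 x : 0 < x < 1 -> Derive_n h m x = Derive_n F m x.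
  move=> hx; apply: Derive_n_ext_loc; apply: (locally_interval _ x 0 1) => /= [||y y0 y1]; try lra.
  rewrite hext (@antiperiodic_ext_on F 0); last by rewrite /=; lra.
  by rewrite /alt_sign /= Rminus_0_r Rmult_1_l.
have on1 x : 1 < x < 2 -> Derive_n h m x = - Derive_n F m (x + -1).
  move=> hx; have -> : - Derive_n F m (x + -1) = -1 * Derive_n (fun y => F (y + -1)) m x.
    by rewrite Derive_n_comp_trans; ring.
  rewrite -Derive_n_scal_l.
  apply: Derive_n_ext_loc; apply: (locally_interval _ x 1 2) => /= [||y y1 y2]; try lra.
  rewrite hext (@antiperiodic_ext_on F 1); last by rewrite /=; lra.
  by rewrite /alt_sign /=; ring_simplify (y - 1); ring_simplify (y + -1).
have left_eq : Derive_n h m 1 = Derive_n F m 1.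
  apply: continuous_eq_near ch cF1 _ => d /near1 [e [he ed]].
  by exists (1 - e); split; [rewrite Rabs_left; lra | apply: on0; lra].
have right_eq : Derive_n h m 1 = - Derive_n F m (1 + -1).
  apply: continuous_eq_near (fun x => - Derive_n F m (x + -1)) _ ch _ _.
    apply: (continuous_opp (fun x => Derive_n F m (x + -1))).
    apply: continuous_comp; last by rewrite Rplus_opp_r.
    exact: continuous_plus (continuous_id _) (continuous_const _ _).
  move=> d /near1 [e [he ed]].
  by exists (1 + e); split; [rewrite Rabs_right; lra | apply: on1; lra].
by rewrite -left_eq right_eq Rplus_opp_r.
Qed.

Section ExpPoly.
Variables (r : nat) (eta : 'I_r -> R).

Definition exppoly (p : 'I_r -> {poly R}) (x : R) : R :=
  (\sum_(j < r) (p j).[x] * exp (eta j * x))%R.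

(* The coefficients of (d/dx - l) (exppoly p). *)
Definition deriv_sub (l : R) (p : 'I_r -> {poly R}) : 'I_r -> {poly R} :=
  fun j => ((p j)^`() + (eta j - l) *: p j)%R.

Definition total_size (p : 'I_r -> {poly R}) : nat := (\sum_(j < r) size (p j))%N.

Lemma exppoly_subZ (p q : 'I_r -> {poly R}) l x :
  exppoly (fun j => p j - l *: q j)%R x = exppoly p x - l * exppoly q x.
Proof.
rewrite /exppoly RminusE RmultE mulr_sumr -sumrB; apply: eq_bigr => j _.
by rewrite hornerD hornerN hornerZ mulrBl mulrA.
Qed.

Lemma exppoly_deriv_sub l p x :
  exppoly (deriv_sub l p) x = exppoly (deriv_sub 0 p) x - l * exppoly p x.
Proof.
rewrite -exppoly_subZ /exppoly; apply: eq_bigr => j _.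
by rewrite !hornerE /= subr0 mulrBl addrA.
Qed.

Lemma derivable_pt_lim_exppoly l p x :
  derivable_pt_lim (exppoly p) x (exppoly (deriv_sub l p) x + l * exppoly p x).
Proof.
rewrite exppoly_deriv_sub /Rminus Rplus_assoc Rplus_opp_l Rplus_0_r /exppoly.
apply: (@derivable_pt_lim_bigsum _ _ (fun j t => (p j).[t] * exp (eta j * t))%R
  (fun j t => (deriv_sub 0 p j).[t] * exp (eta j * t))%R) => j.
have dexp : derivable_pt_lim (fun t => exp (eta j * t)) x (eta j * exp (eta j * x)).
  by apply/is_derive_Reals; auto_derive; [|ring].
have := derivable_pt_lim_mult _ _ x _ _ (derivable_pt_lim_horner (p j) x) dexp.
by rewrite /deriv_sub !hornerE /= subr0 mulrDl (mulrC (eta j)) -RplusE -!RmultE; apply.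
Qed.

Lemma exppoly_iter_deriv_sub m l p x :
  exppoly (iter m (deriv_sub 0) (deriv_sub l p)) x =
  exppoly (iter m.+1 (deriv_sub 0) p) x - l * exppoly (iter m (deriv_sub 0) p) x.
Proof.
rewrite -exppoly_subZ; congr exppoly.
elim: m => [|m IH]; apply: functional_extensionality => j.
  by rewrite /= /deriv_sub subr0 scalerBl addrA.
rewrite [LHS]/= IH /=; move: (iter m _ p) => C.
rewrite /deriv_sub derivB derivZ !scalerBr !scalerDr !scalerA.
by rewrite opprD addrACA (mulrC l).
Qed.

Lemma derivable_pt_lim_exppoly0 p x :
  derivable_pt_lim (exppoly p) x (exppoly (deriv_sub 0 p) x).
Proof. by have := derivable_pt_lim_exppoly 0 p x; rewrite Rmult_0_l Rplus_0_r. Qed.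

Lemma Derive_n_exppoly m p x :
  Derive_n (exppoly p) m x = exppoly (iter m (deriv_sub 0) p) x.
Proof.
elim: m x => [|m IH] x //=; rewrite (Derive_ext _ _ x IH).
by apply: is_derive_unique; apply/is_derive_Reals; exact: derivable_pt_lim_exppoly0.
Qed.

Lemma continuous_Derive_n_exppoly m p x : continuous (Derive_n (exppoly p) m) x.
Proof.
apply: (continuous_ext (exppoly (iter m (deriv_sub 0) p))) => [t|].
  by rewrite Derive_n_exppoly.
apply: ex_derive_continuous; eexists; apply/is_derive_Reals.
exact: derivable_pt_lim_exppoly0.
Qed.

Lemma size_deriv_sub l p j : (size (deriv_sub l p j) <= size (p j))%N.
Proof.
rewrite /deriv_sub; apply: leq_trans (size_polyD _ _) _.
rewrite geq_max size_scale_leq andbT.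
have [->|nz] := eqVneq (p j) 0%R; first by rewrite deriv0.
exact: ltnW (lt_size_deriv nz).
Qed.

Lemma total_size_deriv_sub l p : (total_size (deriv_sub l p) <= total_size p)%N.
Proof. by apply: leq_sum => j _; apply: size_deriv_sub. Qed.

(* (d/dx - eta j) kills the exponential of the j-th term, lowering its degree. *)
Lemma total_size_deriv_sub_lt p j : p j != 0%R ->
  (total_size (deriv_sub (eta j) p) < total_size p)%N.
Proof.
move=> nz; rewrite /total_size (bigD1 j) //= [X in (_ < X)%N](bigD1 j) //=.
rewrite -addSn leq_add //; last by apply: leq_sum => i _; apply: size_deriv_sub.
by rewrite /deriv_sub subrr scale0r addr0; exact: lt_size_deriv.
Qed.

Lemma exppoly_total_size0 p x : total_size p = 0%N -> exppoly p x = 0.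
Proof.
move=> p0; rewrite /exppoly big1 // => j _.
suff /eqP : size (p j) = 0%N by rewrite size_poly_eq0 => /eqP ->; rewrite horner0 mul0r.
by apply/eqP; rewrite -leqn0 -p0 /total_size (bigD1 j) //= leq_addr.
Qed.

Lemma total_size_neq0 p : total_size p <> 0%N -> exists j, p j != 0%R.
Proof.
move=> pn0; apply: NNPP => all0; apply: pn0; rewrite /total_size big1 // => j _.
by apply/eqP; rewrite size_poly_eq0; apply/negPn/negP => nz; apply: all0; exists j.
Qed.

Lemma exppoly_no_sign_change p sg a b : (total_size p <= 1)%N -> a < b ->
  0 < sg * exppoly p a -> sg * exppoly p b < 0 -> False.
Proof.
move=> small ab pa nb.
have [p0|pn0] := eqVneq (total_size p) 0%N.
  by move: pa; rewrite exppoly_total_size0 //; lra.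
have [j nz] := total_size_neq0 (elimN eqP pn0).
have [c [_ neg]] := weighted_sign_change (derivable_pt_lim_exppoly (eta j) p) ab pa nb.
have p'0 : total_size (deriv_sub (eta j) p) = 0%N.
  by have := total_size_deriv_sub_lt nz; lia.
by move: neg; rewrite exppoly_total_size0 //; lra.
Qed.

Lemma exppoly_no_alternation p sg : (total_size p <= 2)%N ->
  ~ sign_alternation (exppoly p) sg.
Proof.
move=> small [a [b [c [[ab bc] [_ [pa [nb pc]]]]]]].
have [p0|pn0] := eqVneq (total_size p) 0%N.
  by move: pa; rewrite exppoly_total_size0 //; lra.
have [j nz] := total_size_neq0 (elimN eqP pn0).
have [d [dab nd]] := weighted_sign_change (derivable_pt_lim_exppoly (eta j) p) ab pa nb.
have [e [ebc pe]] : exists e, b < e < c /\ - sg * exppoly (deriv_sub (eta j) p) e < 0.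
  by apply: (weighted_sign_change (derivable_pt_lim_exppoly (eta j) p)); lra.
apply: (exppoly_no_sign_change (p := deriv_sub (eta j) p) (sg := - sg) (a := d) (b := e));
  try lra.
by have := total_size_deriv_sub_lt nz; lia.
Qed.

Lemma exppoly_sign_constant p : (total_size p <= 1)%N ->
  exists sg, (sg = 1 \/ sg = -1) /\ forall x, 0 <= sg * exppoly p x.
Proof.
move=> small; have [[a pa]|nopos] := classic (exists a, 0 < exppoly p a).
  exists 1; split; first by left.
  move=> b; apply: Rnot_lt_le => nb.
  have [ab|[ab|ba]] := Rtotal_order a b.
  - by apply: (exppoly_no_sign_change (sg := 1) small ab); lra.
  - by subst; lra.
  - by apply: (exppoly_no_sign_change (sg := -1) small ba); lra.
exists (-1); split; first by right.
by move=> b; apply: Rnot_lt_le => nb; apply: nopos; exists b; lra.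
Qed.

Lemma exppoly_ext_no_alternation n p sg : (total_size p <= n + 2)%N ->
  (forall m, (m < n)%N ->
     exppoly (iter m (deriv_sub 0) p) 1 = - exppoly (iter m (deriv_sub 0) p) 0) ->
  ~ sign_alternation (antiperiodic_ext (exppoly p)) sg.
Proof.
have base q sg' : (total_size q <= 2)%N -> ~ sign_alternation (antiperiodic_ext (exppoly q)) sg'.
  move=> small /antiperiodic_ext_alternation [sg'' alt]; exact: exppoly_no_alternation small alt.
elim: n p sg => [|n IH] p sg small ends; first exact: base.
have [small2|big] := leqP (total_size p) 2; first exact: base.
have [j nz] := @total_size_neq0 p ltac:(lia).
move/(sign_alternation_step (derivable_pt_lim_exppoly (eta j) p) (ends 0%N (ltn0Sn n))).
apply: IH; first by have := total_size_deriv_sub_lt nz; lia.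
move=> m mn; rewrite !exppoly_iter_deriv_sub (ends m.+1 mn) (ends m (ltnW mn)); ring.
Qed.

Lemma exppoly_ext_ends (h : R -> R) p m :
  (forall x, h x = antiperiodic_ext (exppoly p) x) -> continuous (Derive_n h m) 1 ->
  exppoly (iter m (deriv_sub 0) p) 1 = - exppoly (iter m (deriv_sub 0) p) 0.
Proof.
move=> hext ch; rewrite -!Derive_n_exppoly.
by apply: (antiperiodic_ext_Derive_n_ends hext ch); apply: continuous_Derive_n_exppoly.
Qed.

Lemma exppoly_ext_monotone_windows q : (2 <= total_size q)%N ->
  (forall m, (m <= total_size q - 2)%N ->
     exppoly (iter m (deriv_sub 0) q) 1 = - exppoly (iter m (deriv_sub 0) q) 0) ->
  exists x0, forall k : Z,
    monotone_on_Ico (x0 + IZR k) (x0 + IZR k + 1) (antiperiodic_ext (exppoly q)).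
Proof.
move=> big ends.
set dF := antiperiodic_ext (exppoly (deriv_sub 0 q)).
have noalt : ~ sign_alternation dF 1.
  apply: (@exppoly_ext_no_alternation (total_size q - 2)).
  - by rewrite subnK //; exact: total_size_deriv_sub.
  - by move=> m mn; rewrite -iterSr; apply: ends.
have [x0 nonpos] := antiperiodic_nonpos_window (@antiperiodic_ext_succ _) noalt.
exists x0 => k; apply: (monotone_of_mvt (dF := dF) (sg := - alt_sign k)).
- by case: (alt_sign_pm1 k) => ->; [right|left]; ring.
- move=> x y wx xy yw decr.
  apply: (antiperiodic_ext_mvt (derivable_pt_lim_exppoly 0 q) (ends 0%N (leq0n _))); try lra.
  by rewrite Ropp_0 !Rmult_0_l exp_0 !Rmult_1_l.
- exact: antiperiodic_window_sign (@antiperiodic_ext_succ _) nonpos.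
Qed.

Lemma exppoly_ext_monotone_unit q k : (total_size q <= 1)%N ->
  monotone_on_Ico (IZR k) (IZR k + 1) (antiperiodic_ext (exppoly q)).
Proof.
move=> small.
have [sg [sg1 nonneg]] := exppoly_sign_constant (leq_trans (total_size_deriv_sub 0 q) small).
apply: (monotone_of_mvt (dF := antiperiodic_ext (exppoly (deriv_sub 0 q)))
  (sg := sg * alt_sign k)).
- by case: sg1 (alt_sign_pm1 k) => -> [] ->; [left|right|right|left]; ring.
- move=> x y kx xy yk decr.
  apply: (antiperiodic_ext_mvt_piece (derivable_pt_lim_exppoly 0 q) (k := k)); try lra.
  rewrite Ropp_0 !Rmult_0_l exp_0 !Rmult_1_l.
  by rewrite -!(@antiperiodic_ext_on _ k); lra.
- move=> c kc; rewrite (@antiperiodic_ext_on _ k); last lra.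
  have -> : sg * alt_sign k * (alt_sign k * exppoly (deriv_sub 0 q) (c - IZR k)) =
    sg * exppoly (deriv_sub 0 q) (c - IZR k) * (alt_sign k * alt_sign k) by ring.
  by rewrite alt_sign_sqr Rmult_1_r.
Qed.

End ExpPoly.

Theorem mainTheorem6 (r : nat) (eta : 'I_r -> R) (q : 'I_r -> {poly R})
  (h : R -> R) :
  injective eta ->
  (forall j : 'I_r, q j != 0%R) ->
  let gamma := (\sum_(j < r) size (q j))%N in
  ((2 <= gamma)%N ->
     C_n (gamma - 2) h /\ abs_cont (Derive_n h (gamma - 2))) ->
  (forall x : R, h (x + 1) = - h x) ->
  (forall x : R, 0 <= x < 1 ->
     h x = (\sum_(j < r) (q j).[x] * exp (eta j * x))%R) ->
  exists x0 : R, forall k : Z,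
    monotone_on_Ico (x0 + IZR k) (x0 + IZR k + 1) h.
Proof.
move=> _ _ gamma hreg anti onF.
have hext : forall x, h x = antiperiodic_ext (exppoly eta q) x.
  exact: antiperiodic_eq_ext anti onF.
have [big|small] := leqP 2 gamma.
  have [hC _] := hreg big.
  have [x0 mono] := exppoly_ext_monotone_windows big
    (fun m hm => exppoly_ext_ends hext (hC m hm 1).2).
  by exists x0 => k; rewrite (functional_extensionality _ _ hext).
exists 0 => k; rewrite (functional_extensionality _ _ hext) Rplus_0_l.
exact: exppoly_ext_monotone_unit.
Qed.
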